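(* If $n$ is a non-negative integer, then $$\sum_{k = 1}^n \sum_{j = 0}^{k - 1} \frac{H_{n-j}}{k-j} = (n+1)H_n^2 - (2n+1)H_n + 2n,$$ $$\sum_{k = 1}^n \sum_{j = 0}^{k - 1} \frac{H_{n-j}^2}{k-j} = (n+1)H_n^3 - \frac{3}{2}(2n+1)H_n^2 + 3(2n+1)H_n + \frac{1}{2}H_n^{(2)} - 6n,$$ and $$\sum_{k = 1}^n \sum_{j = 0}^{k - 1} \frac{H_{n-j}^{(2)}}{k-j} = (n+1)H_n H_n^{(2)} - \frac{1}{2}(2n+1)H_n^{(2)} + H_n - \frac{1}{2}H_n^2.$$
   Context: $H_n=\sum_{m=1}^n\frac1m$ and $H_n^{(2)}=\sum_{m=1}^n\frac1{m^2}$. Empty sums are zero. *)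

From mathcomp Require Import all_boot all_order all_algebra.
Set Implicit Arguments. Unset Strict Implicit. Unset Printing Implicit Defensive.
Import Order.TTheory GRing.Theory Num.Theory.
Local Open Scope ring_scope.

Definition H (n : nat) : rat := \sum_(1 <= m < n.+1) (m%:R)^-1.
Definition H2 (n : nat) : rat := \sum_(1 <= m < n.+1) ((m%:R) ^+ 2)^-1.

(** Setting [m = n - j] and [i = k - j], the double sum becomes
    [\sum_(1 <= m <= n) g m * \sum_(1 <= i <= m) 1/i = \sum_(1 <= m <= n) g m * H m].
    Each of the three closed forms is then checked by telescoping: its increment
    from [n] to [n + 1] is a rational-function identity in [H n], [H2 n] and [n],
    after substituting [H (n + 1) = H n + 1/(n + 1)] and
    [H2 (n + 1) = H2 n + 1/(n + 1)^2]. *)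
From mathcomp Require Import all_boot all_order all_algebra.
From mathcomp Require Import ring.
Import Order.TTheory GRing.Theory Num.Theory.
Local Open Scope ring_scope.

Lemma H0 : H 0 = 0. Proof. by rewrite /H big_geq. Qed.

Lemma H20 : H2 0 = 0. Proof. by rewrite /H2 big_geq. Qed.

Lemma HS n : H n.+1 = H n + n.+1%:R^-1.
Proof. by rewrite /H big_nat_recr. Qed.

Lemma H2S n : H2 n.+1 = H2 n + (n.+1%:R ^+ 2)^-1.
Proof. by rewrite /H2 big_nat_recr. Qed.

Lemma sum_nat1_telescope (V : zmodType) (f F : nat -> V) :
  F 0 = 0 -> (forall m, F m.+1 = F m + f m.+1) ->
  forall n, \sum_(1 <= m < n.+1) f m = F n.
Proof.
move=> F0 FS; elim => [|n IHn]; first by rewrite big_geq.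
by rewrite big_nat_recr //= IHn FS.
Qed.

Lemma sum_sum_div_subE (g : nat -> rat) n :
  \sum_(1 <= k < n.+1) \sum_(0 <= j < k) g (n - j)%N / (k - j)%:R
  = \sum_(1 <= m < n.+1) g m * H m.
Proof.
elim: n => [|n IHn]; first by rewrite !big_geq.
rewrite [RHS]big_nat_recr //= -IHn big_nat_recl // big_nat1 !subn0 divr1.
have peel_j0 k : \sum_(0 <= j < k.+1) g (n.+1 - j)%N / (k.+1 - j)%:R
    = g n.+1 / k.+1%:R + \sum_(0 <= j < k) g (n - j)%N / (k - j)%:R.
  by rewrite big_nat_recl //= !subn0.
rewrite (eq_bigr _ (fun k _ => peel_j0 k)) big_split /= addrA [RHS]addrC.
rewrite /H mulr_sumr; congr (_ + _).
by rewrite [RHS]big_nat_recl // divr1.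
Qed.

Lemma sum_H_mulH n : \sum_(1 <= m < n.+1) H m * H m
  = n.+1%:R * H n ^+ 2 - (2 * n + 1)%:R * H n + (2 * n)%:R.
Proof.
move: n; apply: sum_nat1_telescope => [|m]; first by rewrite H0; ring.
have m1_neq0 : m.+1%:R != 0 :> rat by rewrite pnatr_eq0.
by rewrite HS; field; rewrite addrC natr1.
Qed.

Lemma sum_Hsqr_mulH n : \sum_(1 <= m < n.+1) H m ^+ 2 * H m
  = n.+1%:R * H n ^+ 3 - 3%:R / 2%:R * (2 * n + 1)%:R * H n ^+ 2
    + 3%:R * (2 * n + 1)%:R * H n + H2 n / 2%:R - (6 * n)%:R.
Proof.
move: n; apply: sum_nat1_telescope => [|m]; first by rewrite H0 H20; field.
have m1_neq0 : m.+1%:R != 0 :> rat by rewrite pnatr_eq0.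
by rewrite HS H2S; field; rewrite addrC natr1.
Qed.

Lemma sum_H2_mulH n : \sum_(1 <= m < n.+1) H2 m * H m
  = n.+1%:R * H n * H2 n - (2 * n + 1)%:R * H2 n / 2%:R + H n
    - H n ^+ 2 / 2%:R.
Proof.
move: n; apply: sum_nat1_telescope => [|m]; first by rewrite H0 H20; field.
have m1_neq0 : m.+1%:R != 0 :> rat by rewrite pnatr_eq0.
by rewrite HS H2S; field; rewrite addrC natr1.
Qed.

Theorem proposition12 (n : nat) :
  [/\ \sum_(1 <= k < n.+1) \sum_(0 <= j < k) H (n - j) / (k - j)%:R
        = n.+1%:R * H n ^+ 2 - (2 * n + 1)%:R * H n + (2 * n)%:R,
      \sum_(1 <= k < n.+1) \sum_(0 <= j < k) H (n - j) ^+ 2 / (k - j)%:R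
        = n.+1%:R * H n ^+ 3 - 3%:R / 2%:R * (2 * n + 1)%:R * H n ^+ 2
          + 3%:R * (2 * n + 1)%:R * H n + H2 n / 2%:R - (6 * n)%:R
    & \sum_(1 <= k < n.+1) \sum_(0 <= j < k) H2 (n - j) / (k - j)%:R
        = n.+1%:R * H n * H2 n - (2 * n + 1)%:R * H2 n / 2%:R + H n
          - H n ^+ 2 / 2%:R].
Proof.
split.
- by rewrite (sum_sum_div_subE H) sum_H_mulH.
- by rewrite (sum_sum_div_subE (fun m => H m ^+ 2)) sum_Hsqr_mulH.
- by rewrite (sum_sum_div_subE H2) sum_H2_mulH.
Qed.
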